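(* Suppose $(\hat{\mathbf{x}},\hat{\mathbf{z}},\boldsymbol{\tau}_x,\boldsymbol{\tau}_p)$ is a solution to the optimization $$\min_{\bar{\mathbf{x}},\bar{\mathbf{z}},\bar{\boldsymbol{\tau}}_x,\bar{\boldsymbol{\tau}}_p} F_{\rm SP}(\bar{\mathbf{x}},\bar{\mathbf{z}},\bar{\boldsymbol{\tau}}_x,\bar{\boldsymbol{\tau}}_p)\quad\text{s.t. } \bar{\mathbf{z}}=\mathbf{A}\bar{\mathbf{x}},\ \bar{\boldsymbol{\tau}}_p=\mathbf{S}\bar{\boldsymbol{\tau}}_x. \qquad (\ast)$$ Then this $\boldsymbol{\tau}_p$, together with the densities $(\hat b_x,\hat b_z)$ attaining the minima defining $F^x_{\rm SP}(\hat{\mathbf{x}},\boldsymbol{\tau}_x)$ and $F^z_{\rm SP}(\hat{\mathbf{z}},\boldsymbol{\tau}_p)$, is a minimizer of the variational optimization $$\min_{b_x,b_z,\bar{\boldsymbol{\tau}}_p} J_{\rm SP}(b_x,b_z,\bar{\boldsymbol{\tau}}_p)\quad\text{s.t. } \mathbb{E}(\mathbf{z}|b_z)=\mathbf{A}\,\mathbb{E}(\mathbf{x}|b_x),\ \ \bar{\boldsymbol{\tau}}_p=\mathbf{S}\,\mathrm{var}(\mathbf{x}|b_x). \qquad (\ast\ast)$$ Conversely, given any solution $(\hat b_x,\hat b_z,\boldsymbol{\tau}_p)$ of $(\ast\ast)$, the vectors $\hat{\mathbf{x}}=\mathbb{E}(\mathbf{x}|\hat b_x)$, $\boldsymbol{\tau}_x=\mathrm{var}(\mathbf{x}|\hat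 b_x)$, $\hat{\mathbf{z}}=\mathbb{E}(\mathbf{z}|\hat b_z)$, $\boldsymbol{\tau}_p=\mathbf{S}\boldsymbol{\tau}_x$ together are a solution to $(\ast)$.
   Context: $\mathbf{A}\in\mathbb{R}^{m\times n}$, $\mathbf{S}:=|\mathbf{A}|^2$ (entrywise squared magnitude). $f_x(\mathbf{x})=\sum_{j=1}^n f_{x_j}(x_j)$, $f_z(\mathbf{z})=\sum_{i=1}^m f_{z_i}(z_i)$. Densities $b_x$ on $\mathbb{R}^n$ and $b_z$ on $\mathbb{R}^m$ range over factorizable (product) densities $b_x=\prod_j b_{x_j}$, $b_z=\prod_i b_{z_i}$. $\mathbb{E}(\cdot|b)$ denotes the mean vector and $\mathrm{var}(\cdot|b)$ the vector of componentwise variances (not a covariance matrix). $D(b\|e^{-f}):=\int b\log(b/e^{-f})$. For positive $\bar{\boldsymbol{\tau}}_p$, $H_{\rm gauss}(b_z,\bar{\boldsymbol{\tau}}_p):=\sum_{i=1}^m\big[\frac{1}{2\bar\tau_{p_i}}\mathrm{var}(z_i|b_{z_i})+\frac12\log(2\pi\bar\tau_{p_i})\big]$ and $J_{\rm SP}(b_x,b_z,\bar{\boldsymbol{\tau}}_p):=D(b_x\|e^{-f_x})+D(b_z\|e^{-f_z})+H_{\rm gauss}(b_z,\bar{\boldsymbol{\tau}}_p)$. Further, $F^x_{\rm SP}(\bar{\mathbf{x}},\bar{\boldsymbol{\tau}}_x):=\min_{b_x}D(b_x\|e^{-f_x})$ s.t. $\mathbb{E}(\mathbf{x}|b_x)=\bar{\mathbf{x}}$,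 $\mathrm{var}(\mathbf{x}|b_x)=\bar{\boldsymbol{\tau}}_x$; $F^z_{\rm SP}(\bar{\mathbf{z}},\bar{\boldsymbol{\tau}}_p):=\min_{b_z}\big[D(b_z\|e^{-f_z})+H_{\rm gauss}(b_z,\bar{\boldsymbol{\tau}}_p)\big]$ s.t. $\mathbb{E}(\mathbf{z}|b_z)=\bar{\mathbf{z}}$; $F_{\rm SP}(\bar{\mathbf{x}},\bar{\mathbf{z}},\bar{\boldsymbol{\tau}}_x,\bar{\boldsymbol{\tau}}_p):=F^x_{\rm SP}(\bar{\mathbf{x}},\bar{\boldsymbol{\tau}}_x)+F^z_{\rm SP}(\bar{\mathbf{z}},\bar{\boldsymbol{\tau}}_p)$. *)

From HB Require Import structures.
From mathcomp Require Import all_boot all_order all_algebra.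
From mathcomp Require Import all_classical all_reals all_analysis.
Set Implicit Arguments. Unset Strict Implicit. Unset Printing Implicit Defensive.
Import Order.TTheory GRing.Theory Num.Theory.
Local Open Scope ring_scope.

Section Defs.
Variable R : realType.

Local Notation leb := (@lebesgue_measure R).

Definition rint (g : R -> R) : R := fine (\int[leb]_x (g x)%:E)%E.

Definition integrableR (g : R -> R) : Prop := leb.-integrable setT (EFin \o g).

Definition is_density (b : R -> R) : Prop :=
  measurable_fun setT b /\ (forall x, 0 <= b x) /\ integrableR b /\ rint b = 1.

(** the integrand of D(b || e^{-f}) = \int b log (b / e^{-f}) = \int b (log b + f) *)
Definition kl_integrand (f b : R -> R) (x : R) : R := b x * (ln (b x) + f x).

Definition admissible (f b : R -> R) : Prop :=
  is_density b /\ integrableR (fun x => x * b x) /\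
  integrableR (fun x => x ^+ 2 * b x) /\ integrableR (kl_integrand f b).

Definition mean (b : R -> R) : R := rint (fun x => x * b x).
Definition var (b : R -> R) : R := rint (fun x => (x - mean b) ^+ 2 * b x).
Definition KL (f b : R -> R) : R := rint (kl_integrand f b).

(** factorizable densities on R^k are given by their factors b_j *)
Definition meanv k (b : 'I_k -> R -> R) : 'cV[R]_k := \col_j mean (b j).
Definition varv k (b : 'I_k -> R -> R) : 'cV[R]_k := \col_j var (b j).

(** D(b || e^{-f}) for factorizable b and separable f *)
Definition Dv k (f : 'I_k -> R -> R) (b : 'I_k -> R -> R) : R :=
  \sum_(j < k) KL (f j) (b j).

Definition admissible_v k (f : 'I_k -> R -> R) (b : 'I_k -> R -> R) : Prop :=
  forall j, admissible (f j) (b j).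

Definition Hgauss m (bz : 'I_m -> R -> R) (tp : 'cV[R]_m) : R :=
  \sum_(i < m) (var (bz i) / (2 * tp i 0) + ln (2 * pi * tp i 0) / 2).

Definition posv m (t : 'cV[R]_m) : Prop := forall i, 0 < t i 0.

Definition Jsp n m (fx : 'I_n -> R -> R) (fz : 'I_m -> R -> R)
  (bx : 'I_n -> R -> R) (bz : 'I_m -> R -> R) (tp : 'cV[R]_m) : R :=
  Dv fx bx + Dv fz bz + Hgauss bz tp.

Definition Smx m n (A : 'M[R]_(m, n)) : 'M[R]_(m, n) := map_mx (fun a => a ^+ 2) A.

Definition Fx_feas n (fx : 'I_n -> R -> R) (xb tx : 'cV[R]_n) (bx : 'I_n -> R -> R) :=
  admissible_v fx bx /\ meanv bx = xb /\ varv bx = tx.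
Definition Fz_feas m (fz : 'I_m -> R -> R) (zb : 'cV[R]_m) (bz : 'I_m -> R -> R) :=
  admissible_v fz bz /\ meanv bz = zb.

Definition Fx_SP n (fx : 'I_n -> R -> R) (xb tx : 'cV[R]_n) : \bar R :=
  ereal_inf [set (Dv fx bx)%:E | bx in Fx_feas fx xb tx].
Definition Fz_SP m (fz : 'I_m -> R -> R) (zb tp : 'cV[R]_m) : \bar R :=
  ereal_inf [set (Dv fz bz + Hgauss bz tp)%:E | bz in Fz_feas fz zb].

(** F_SP = F^x_SP + F^z_SP, with +oo absorbing (an infeasible inner problem
    makes the whole value +oo) *)
Definition F_SP n m (fx : 'I_n -> R -> R) (fz : 'I_m -> R -> R)
  (xb : 'cV[R]_n) (zb : 'cV[R]_m) (tx : 'cV[R]_n) (tp : 'cV[R]_m) : \bar R :=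
  dual_adde (Fx_SP fx xb tx) (Fz_SP fz zb tp).

Definition attains_Fx n (fx : 'I_n -> R -> R) (xb tx : 'cV[R]_n) bx : Prop :=
  Fx_feas fx xb tx bx /\ forall bx', Fx_feas fx xb tx bx' -> Dv fx bx <= Dv fx bx'.
Definition attains_Fz m (fz : 'I_m -> R -> R) (zb tp : 'cV[R]_m) bz : Prop :=
  Fz_feas fz zb bz /\ forall bz', Fz_feas fz zb bz' ->
    Dv fz bz + Hgauss bz tp <= Dv fz bz' + Hgauss bz' tp.

Definition star_feas m n (A : 'M[R]_(m, n)) (xb : 'cV[R]_n) (zb : 'cV[R]_m)
  (tx : 'cV[R]_n) (tp : 'cV[R]_m) : Prop :=
  zb = A *m xb /\ tp = Smx A *m tx /\ posv tp.

Definition solves_star m n (A : 'M[R]_(m, n)) fx fz xh zh tx tp : Prop :=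
  star_feas A xh zh tx tp /\
  forall xb zb txb tpb, star_feas A xb zb txb tpb ->
    (F_SP fx fz xh zh tx tp <= F_SP fx fz xb zb txb tpb)%E.

Definition starstar_feas m n (A : 'M[R]_(m, n)) (fx : 'I_n -> R -> R)
  (fz : 'I_m -> R -> R) bx bz (tp : 'cV[R]_m) : Prop :=
  admissible_v fx bx /\ admissible_v fz bz /\
  meanv bz = A *m meanv bx /\ tp = Smx A *m varv bx /\ posv tp.

Definition solves_starstar m n (A : 'M[R]_(m, n)) fx fz bx bz tp : Prop :=
  starstar_feas A fx fz bx bz tp /\
  forall bx' bz' tp', starstar_feas A fx fz bx' bz' tp' ->
    Jsp fx fz bx bz tp <= Jsp fx fz bx' bz' tp'.

End Defs.

From mathcomp Require Import all_boot all_order all_algebra.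
From mathcomp Require Import all_classical all_reals all_analysis.
Set Implicit Arguments. Unset Strict Implicit. Unset Printing Implicit Defensive.
Import Order.TTheory GRing.Theory Num.Theory DualAddTheory.
Local Open Scope ring_scope.

(* J_SP separates into an x-part D(b_x || e^{-f_x}) and a z-part
   D(b_z || e^{-f_z}) + H_gauss, and the constraints of the variational problem
   see the densities only through the means and the variances of b_x.
   Minimizing each part over the densities with prescribed moments gives
   F^x_SP and F^z_SP, so the moment problem is the variational problem
   minimized in two stages, and the two have the same minimizers. *)

Section EFinInfimum.
Variables (R : realType) (S : Type) (f : S -> R) (P : set S).

Lemma ereal_inf_EFin_le a :
  P a -> (ereal_inf [set (f a)%:E | a in P] <= (f a)%:E)%E.
Proof. by move=> Pa; apply: ereal_inf_lbound; exists a. Qed.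

Lemma ereal_inf_EFin_attained a : P a -> (forall a', P a' -> f a <= f a') ->
  ereal_inf [set (f a)%:E | a in P] = (f a)%:E.
Proof.
move=> Pa fa_min; apply/le_anti; rewrite ereal_inf_EFin_le //=.
by apply: le_ereal_inf_tmp => _ [a' Pa' <-]; rewrite lee_fin fa_min.
Qed.

End EFinInfimum.

Section SeparableInfimum.
Variables (R : realType) (S T : Type) (f : S -> R) (g : T -> R).
Variables (P : set S) (Q : set T).

Local Notation infP := (ereal_inf [set (f a)%:E | a in P]).
Local Notation infQ := (ereal_inf [set (g b)%:E | b in Q]).

Lemma ereal_inf_EFin_dadd_le a b :
  P a -> Q b -> (dual_adde infP infQ <= (f a + g b)%:E)%E.
Proof.
by move=> Pa Qb; rewrite dEFinD; apply: lee_dD; apply: ereal_inf_EFin_le.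
Qed.

(* The dual sum is needed: an empty [Q] must give +oo even when infP = -oo. *)
Lemma ereal_inf_EFin_dadd_ge (c : R) :
  (forall a b, P a -> Q b -> c <= f a + g b) ->
  (c%:E <= dual_adde infP infQ)%E.
Proof.
move=> c_lb.
have infP_ge b : Q b -> ((c - g b)%:E <= infP)%E.
  move=> Qb; apply: le_ereal_inf_tmp => _ [a Pa <-].
  by rewrite lee_fin lerBlDr c_lb.
case: infP infP_ge => [x||] infP_ge.
- have infQ_ge : ((c - x)%:E <= infQ)%E.
    apply: le_ereal_inf_tmp => _ [b Qb <-].
    by move: (infP_ge b Qb); rewrite !lee_fin lerBlDr lerBlDl.
  by rewrite -(subrKC x c) dEFinD lee_dD.
- exact: leey.
- have [[b Qb]|noQ] := pselect (exists b, Q b).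
    by have := infP_ge b Qb; rewrite leeNy_eq.
  suff -> : infQ = +oo%E by exact: leey.
  by rewrite ereal_inf_pinfty => y [b Qb _]; case: noQ; exists b.
Qed.

End SeparableInfimum.

Section SPObjectives.
Variables (R : realType) (m n : nat) (A : 'M[R]_(m, n)).
Variables (fx : 'I_n -> R -> R) (fz : 'I_m -> R -> R).

Lemma F_SP_le_Jsp xb zb tx tp bx bz :
  Fx_feas fx xb tx bx -> Fz_feas fz zb bz ->
  (F_SP fx fz xb zb tx tp <= (Jsp fx fz bx bz tp)%:E)%E.
Proof. by move=> Fx Fz; rewrite /Jsp -addrA; apply: ereal_inf_EFin_dadd_le. Qed.

Lemma F_SP_attained xb zb tx tp bx bz :
  attains_Fx fx xb tx bx -> attains_Fz fz zb tp bz ->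
  F_SP fx fz xb zb tx tp = (Jsp fx fz bx bz tp)%:E.
Proof.
move=> [Fx bx_min] [Fz bz_min].
rewrite /F_SP /Fx_SP /Fz_SP (ereal_inf_EFin_attained Fx bx_min).
by rewrite (ereal_inf_EFin_attained Fz bz_min) /Jsp -addrA dEFinD.
Qed.

Lemma starstar_feas_moments bx bz tp :
  starstar_feas A fx fz bx bz tp ->
  [/\ Fx_feas fx (meanv bx) (varv bx) bx, Fz_feas fz (meanv bz) bz
    & star_feas A (meanv bx) (meanv bz) (varv bx) tp].
Proof. by move=> [Ax [Az [Emz [Etp tp_pos]]]]. Qed.

Lemma star_feas_starstar xb zb tx tp bx bz :
  star_feas A xb zb tx tp -> Fx_feas fx xb tx bx -> Fz_feas fz zb bz ->
  starstar_feas A fx fz bx bz tp.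
Proof.
by move=> [Ez [Etp tp_pos]] [Ax [Emx Evx]] [Az Emz]; subst.
Qed.

Lemma Jsp_le_F_SP (c : R) xb zb tx tp :
  (forall bx bz, Fx_feas fx xb tx bx -> Fz_feas fz zb bz ->
     c <= Jsp fx fz bx bz tp) ->
  (c%:E <= F_SP fx fz xb zb tx tp)%E.
Proof.
move=> c_lb; apply: ereal_inf_EFin_dadd_ge => bx bz Fx Fz.
by rewrite addrA; apply: c_lb.
Qed.

End SPObjectives.

Theorem lemma2 (R : realType) (m n : nat) (A : 'M[R]_(m, n))
  (fx : 'I_n -> R -> R) (fz : 'I_m -> R -> R) :
  (forall (xh : 'cV[R]_n) (zh : 'cV[R]_m) (tx : 'cV[R]_n) (tp : 'cV[R]_m),
     solves_star A fx fz xh zh tx tp ->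
     forall (bx : 'I_n -> R -> R) (bz : 'I_m -> R -> R),
       attains_Fx fx xh tx bx -> attains_Fz fz zh tp bz ->
       solves_starstar A fx fz bx bz tp)
  /\
  (forall (bx : 'I_n -> R -> R) (bz : 'I_m -> R -> R) (tp : 'cV[R]_m),
     solves_starstar A fx fz bx bz tp ->
     solves_star A fx fz (meanv bx) (meanv bz) (varv bx)
       (mulmx (Smx A) (varv bx))).
Proof.
split.
- move=> xh zh tx tp [feas opt] bx bz hx hz; split.
    by apply: star_feas_starstar feas hx.1 hz.1.
  move=> bx' bz' tp' /starstar_feas_moments[Fx' Fz' feas'].
  rewrite -lee_fin -(F_SP_attained hx hz).
  exact: le_trans (opt _ _ _ _ feas') (F_SP_le_Jsp _ Fx' Fz').
- move=> bx bz tp [feas opt].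
  have [Fx Fz feas_star] := starstar_feas_moments feas.
  have Etp : tp = Smx A *m varv bx by case: feas => _ [_ [_ []]].
  rewrite -Etp; split=> // xb zb txb tpb feasb.
  apply: le_trans (F_SP_le_Jsp tp Fx Fz) _.
  apply: Jsp_le_F_SP => bx' bz' Fx' Fz'.
  exact/opt/(star_feas_starstar feasb).
Qed.
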